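(* Let $G$ be a finite pruned graph. Then $\mathrm{cat}(G)=2$ if and only if $G\cong C_3$, $G\cong P_3$, or $G\cong P_4$.
   Context: Cat Herding is played on a simple graph $G$. The cat first places its token on a vertex. Then the players alternate, the herder moving first: the herder deletes one edge of the current graph, and then, unless the cat's current vertex has degree $0$ in the current graph, the cat moves its token along a path with at least one edge in the current graph to a different vertex. The cat is captured when its vertex has degree $0$ in the current graph, and the game ends; the score is the number of edges deleted. For a finite graph $G$ and $v\in V(G)$, $\mathrm{cat}(G,v)$ is the score under optimal play (herder minimizing, cat maximizing) when the cat starts at $v$, and $\mathrm{cat}(G)=\max_{v}\mathrm{cat}(G,v)$. $P_n$ denotes the path on $n$ vertices and $C_n$ the cycle on $n$ vertices. A pruned graph is a connected graph containing no configuration $x\sim y\sim z$ with $x\neq z$, $\deg(x)=\deg(z)=1$ and $\deg(y)\ge 3$ (i.e. every vertex of degree at least $3$ is adjacent to at most one leaf). *)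

From mathcomp Require Import all_boot.
Set Implicit Arguments. Unset Strict Implicit. Unset Printing Implicit Defensive.

Definition simple_graph (T : finType) (e : rel T) : Prop :=
  irreflexive e /\ symmetric e.

(* The "current graph" during play is a set E of ordered pairs (both
   orientations of each undirected edge are present). *)
Definition edges_of (T : finType) (e : rel T) : {set T * T} :=
  [set p | e p.1 p.2].

Definition degE (T : finType) (E : {set T * T}) (v : T) : nat :=
  #|[set u | (v, u) \in E]|.

Definition del_edge (T : finType) (E : {set T * T}) (p : T * T) : {set T * T} :=
  E :\ p :\ (p.2, p.1).

Definition adjE (T : finType) (E : {set T * T}) : rel T := fun a b => (a, b) \in E.

(* Value of the game with fuel n, current graph E, cat at v, herder to move.
   If v is isolated the cat is captured (score 0 further deletions).
   Otherwise the herder picks an edge p (minimising); then if the cat's vertex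
   is isolated the game ends, else the cat moves to any w <> v reachable from v
   in the current graph (maximising).  The identity n.+1 of the min is an upper
   bound for all values (the min ranges over a nonempty set). *)
Fixpoint catv (T : finType) (n : nat) (E : {set T * T}) (v : T) : nat :=
  match n with
  | 0 => 0
  | n'.+1 =>
    if degE E v == 0 then 0 else
    \big[minn/n'.+2]_(p in E)
      (1 + (let E' := del_edge E p in
            if degE E' v == 0 then 0 else
            \max_(w | (w != v) && connect (adjE E') v w) catv n' E' w))
  end.

(* cat(G, v): fuel #|E| suffices, since each round removes two ordered pairs. *)
Definition cat_v (T : finType) (e : rel T) (v : T) : nat :=
  catv #|edges_of e| (edges_of e) v.

Definition cat_num (T : finType) (e : rel T) : nat := \max_(v : T) cat_v e v.

Definition gdeg (T : finType) (e : rel T) (v : T) : nat := #|[set u | e v u]|.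

Definition graph_connected (T : finType) (e : rel T) : Prop :=
  forall x y : T, connect e x y.

Definition pruned (T : finType) (e : rel T) : Prop :=
  graph_connected e /\
  forall x y z : T, e x y -> e y z -> x != z ->
    ~ [/\ gdeg e x = 1, gdeg e z = 1 & 3 <= gdeg e y].

Definition path_rel (n : nat) : rel 'I_n :=
  fun i j => (i.+1 == j :> nat) || (j.+1 == i :> nat).

Definition cycle_rel (n : nat) : rel 'I_n :=
  fun i j => path_rel i j
    || ((i == 0 :> nat) && (j == n.-1 :> nat))
    || ((j == 0 :> nat) && (i == n.-1 :> nat)).

Definition graph_iso (T U : finType) (e : rel T) (f : rel U) : Prop :=
  exists g : T -> U, bijective g /\ forall x y, e x y = f (g x) (g y).

From mathcomp Require Import all_boot.
Set Implicit Arguments. Unset Strict Implicit. Unset Printing Implicit Defensive.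

(* A vertex of degree at least 2 forces the herder to delete two edges.  The
   herder wins in two moves from u exactly when some edge ab can be deleted
   after which every vertex the cat can move to has degree at most 1;
   otherwise the cat moves to a vertex of degree 2 and scores 3.  Such a
   trapping edge makes the component of u in G - ab a star centred at u.  In
   a connected pruned graph this leaves two shapes around a vertex u with two
   neighbours: a triangle uab carrying every edge not at u, or exactly two
   neighbours of u, one of them a leaf.  Looking at the situation once more
   from a neighbour of u leaves only C3, P3 and P4, for which the trapping
   edges are found by computation. *)

Lemma geq_bigmin_cond (I : finType) (P : pred I) (F : I -> nat) x0 i0 :
  P i0 -> \big[minn/x0]_(i | P i) F i <= F i0.
Proof.
move=> Pi0; have : i0 \in index_enum I := mem_index_enum i0.
elim: (index_enum I) => //= i r IH; rewrite inE big_cons => /predU1P[<-|/IH le_r].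
  by rewrite Pi0 geq_minl.
by case: ifP => // _; rewrite (leq_trans (geq_minr _ _)).
Qed.

Lemma leq_bigmin (I : Type) (r : seq I) (P : pred I) (F : I -> nat) x0 m :
  m <= x0 -> (forall i, P i -> m <= F i) -> m <= \big[minn/x0]_(i <- r | P i) F i.
Proof.
move=> m_x0 m_F; apply: (big_ind (fun x => m <= x)) => // x y m_x m_y.
by rewrite leq_min m_x m_y.
Qed.

Lemma connect_step (T : finType) (r : rel T) x y :
  connect r x y -> x != y -> exists z, r x z.
Proof.
case/connectP => [[|z p] /= r_p ->]; first by rewrite eqxx.
by move=> _; exists z; case/andP: r_p.
Qed.

Section Degrees.

Variable T : finType.
Implicit Types (E : {set T * T}) (e : rel T).

Lemma degE_del_edge_lt E v w :
  (v, w) \in E -> degE (del_edge E (v, w)) v < degE E v.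
Proof.
move=> vw; rewrite /degE [X in _ < X](cardsD1 w) [w \in _]inE vw add1n ltnS.
by apply/subset_leq_card/subsetP => u; rewrite !inE /= !xpair_eqE eqxx => /and3P[_ -> ->].
Qed.

Lemma degE_le_del_edge E p v : degE E v <= (degE (del_edge E p) v).+1.
Proof.
rewrite /degE (cardsD1 (if p.1 == v then p.2 else p.1)) -add1n leq_add ?leq_b1 //.
apply/subset_leq_card/subsetP => u; rewrite !inE => /andP[u_other ->]; rewrite andbT.
case: p u_other => a b /=; rewrite !xpair_eqE.
by case: (eqVneq a v) => [->|av] u_other; rewrite ?eqxx /= (negbTE u_other) ?andbT ?andbF //;
  apply: contra u_other => /andP[/eqP bv /eqP ->]; rewrite -bv eqxx.
Qed.

Lemma degE_edges_of e v : degE (edges_of e) v = gdeg e v.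
Proof. by apply: eq_card => u; rewrite !inE. Qed.

Lemma adjE_edges_of e : adjE (edges_of e) =2 e.
Proof. by move=> x y; rewrite /adjE inE. Qed.

Lemma gdeg_gt0 e v w : e v w -> 0 < gdeg e v.
Proof. by move=> evw; apply/card_gt0P; exists w; rewrite inE. Qed.

End Degrees.

Definition del_edge_rel (T : finType) (e : rel T) (a b : T) : rel T :=
  fun x y => [&& e x y, (x, y) != (a, b) & (x, y) != (b, a)].

Section DeleteEdge.

Variables (T : finType) (e : rel T) (a b : T).

Lemma del_edge_edges_of : del_edge (edges_of e) (a, b) = edges_of (del_edge_rel e a b).
Proof.
apply/setP => -[x y]; rewrite !inE /del_edge_rel /=.
by case: (e x y); rewrite ?andbF ?andbT //= andbC.
Qed.

Lemma del_edge_rel_sub x y : del_edge_rel e a b x y -> e x y.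
Proof. by case/andP. Qed.

Lemma del_edge_relP x y :
  e x y -> [\/ del_edge_rel e a b x y, x = a /\ y = b | x = b /\ y = a].
Proof.
rewrite /del_edge_rel => ->; case: (eqVneq (x, y) (a, b)) => [[-> ->]|ab]; first by constructor 2.
by case: (eqVneq (x, y) (b, a)) => [[-> ->]|ba]; [constructor 3 | constructor 1].
Qed.

Lemma simple_del_edge_rel : simple_graph e -> simple_graph (del_edge_rel e a b).
Proof.
case=> irr_e sym_e; split => [x | x y]; first by rewrite /del_edge_rel irr_e.
rewrite /del_edge_rel sym_e !xpair_eqE.
by case: (x == a); case: (x == b); case: (y == a); case: (y == b); rewrite ?andbF.
Qed.

End DeleteEdge.

Lemma catv_le1 (T : finType) n (E : {set T * T}) v :
  degE E v <= 1 -> catv n E v <= 1.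
Proof.
case: n => [|n] //= deg_le1; case: ifP => // /negbT; rewrite -lt0n => /card_gt0P[w].
rewrite inE => vw; apply: leq_trans (geq_bigmin_cond _ _ vw) _.
suff -> : degE (del_edge E (v, w)) v == 0 by [].
by rewrite -leqn0 -ltnS (leq_trans (degE_del_edge_lt vw)).
Qed.

Lemma catv_gt0 (T : finType) n (E : {set T * T}) v :
  0 < n -> 0 < degE E v -> 0 < catv n E v.
Proof.
case: n => [|n] //= _; rewrite lt0n => /negbTE ->.
by apply: leq_bigmin.
Qed.

Lemma catv_ge2 (T : finType) (e : rel T) n v :
  simple_graph e -> 1 < n -> 1 < gdeg e v -> 1 < catv n (edges_of e) v.
Proof.
case: n => [|n] // simple_e n_gt0 deg_v /=.
rewrite degE_edges_of; have /negbTE -> : gdeg e v != 0 by rewrite -lt0n ltnW.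
apply: leq_bigmin => // -[a b] _; set F := del_edge_rel e a b.
have [irr_F sym_F] := simple_del_edge_rel a b simple_e.
have /card_gt0P[w] : 0 < gdeg F v.
  have := degE_le_del_edge (edges_of e) (a, b) v.
  by rewrite del_edge_edges_of !degE_edges_of => /(leq_trans deg_v).
rewrite inE => Fvw; rewrite del_edge_edges_of degE_edges_of.
have /negbTE -> : gdeg F v != 0 by rewrite -lt0n (gdeg_gt0 Fvw).
rewrite add1n ltnS; apply: leq_trans (leq_bigmax_cond w _) => /=.
  by apply: catv_gt0; rewrite // degE_edges_of (@gdeg_gt0 _ _ _ v) // sym_F.
rewrite (eq_connect (adjE_edges_of _)) connect1 // andbT.
by apply: contraTneq Fvw => ->; rewrite /F irr_F.
Qed.

Definition trap_edge (T : finType) (e : rel T) (u a b : T) : bool :=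
  e a b && [forall w, (w != u) && connect (del_edge_rel e a b) u w ==>
                      (gdeg (del_edge_rel e a b) w <= 1)].

Lemma catv_le2 (T : finType) (e : rel T) n u a b :
  trap_edge e u a b -> catv n (edges_of e) u <= 2.
Proof.
case: n => [|n] //= /andP[eab /forallP trap]; case: ifP => // _.
have ab_in : (a, b) \in edges_of e by rewrite inE.
apply: leq_trans (geq_bigmin_cond _ _ ab_in) _.
rewrite add1n ltnS del_edge_edges_of; case: ifP => // _.
apply/bigmax_leqP => w reach_w; rewrite catv_le1 // degE_edges_of.
by apply: (implyP (trap w)); rewrite -(eq_connect (adjE_edges_of _)).
Qed.

Lemma catv_ge3 (T : finType) (e : rel T) n u a0 b0 :
  simple_graph e -> 2 < n -> e a0 b0 -> (forall a b, ~~ trap_edge e u a b) ->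
  2 < catv n (edges_of e) u.
Proof.
case: n => [|n] // simple_e n_gt1 e_ab0 no_trap.
have escape a b : e a b -> exists w, [/\ w != u, connect (del_edge_rel e a b) u w
                                        & 1 < gdeg (del_edge_rel e a b) w].
  move=> eab; move: (no_trap a b); rewrite /trap_edge eab => /forallPn[w].
  rewrite negb_imply -ltnNge.
  by case/andP => /andP[wu reach] deg_w; exists w.
have nbr_u a b : e a b -> exists z, del_edge_rel e a b u z.
  by case/escape => w [wu reach _]; apply: connect_step reach _; rewrite eq_sym.
rewrite /= degE_edges_of.
have [z /del_edge_rel_sub /gdeg_gt0] := nbr_u _ _ e_ab0; rewrite lt0n => /negbTE ->.
apply: leq_bigmin => [|[a b]]; first exact: leqW.
rewrite inE /= => eab; rewrite del_edge_edges_of degE_edges_of.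
have [z' /gdeg_gt0] := nbr_u _ _ eab; rewrite lt0n => /negbTE ->; rewrite add1n ltnS.
have [w [wu reach deg_w]] := escape a b eab.
apply: leq_trans (leq_bigmax_cond w _) => /=.
  by apply: catv_ge2 => //; apply: simple_del_edge_rel.
by apply/andP; rewrite (eq_connect (adjE_edges_of _)).
Qed.

Lemma edges_of_gt2 (T : finType) (e : rel T) u :
  simple_graph e -> 1 < gdeg e u -> 2 < #|edges_of e|.
Proof.
case=> irr_e sym_e /card_gt1P[v1 [v2 []]]; rewrite !inE => euv1 euv2 v12.
apply/card_gt2P; exists (u, v1), (u, v2), (v1, u); rewrite !inE /= euv1 euv2 sym_e euv1.
have /negbTE uv1 : u != v1 by apply: contraTneq euv1 => <-; rewrite irr_e.
by rewrite !xpair_eqE eqxx v12 uv1 andbF.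
Qed.

Lemma cat_num_eq2 (T : finType) (e : rel T) :
  simple_graph e ->
  cat_num e = 2 <->
  (exists u, 1 < gdeg e u) /\ (forall u, exists a b, trap_edge e u a b).
Proof.
move=> simple_e; split => [cat2 | [[u deg_u] trap]].
  have cat_le2 w : cat_v e w <= 2 by rewrite -cat2; apply: leq_bigmax.
  have [u deg_u] : exists u, 1 < gdeg e u.
    case: (boolP [exists u, 1 < gdeg e u]) => [/existsP // | /existsPn small].
    suff : cat_num e <= 1 by rewrite cat2.
    by apply/bigmax_leqP => v _; rewrite catv_le1 // degE_edges_of leqNgt small.
  split=> [|w]; first by exists u.
  case: (boolP [exists a, exists b, trap_edge e w a b]) => [/existsP[a /existsP[b]] | ].
    by exists a, b.
  move=> /existsPn no_trap; have /card_gt0P[v] := ltnW deg_u; rewrite inE => euv.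
  have {}no_trap a b : ~~ trap_edge e w a b by move/existsPn: (no_trap a); apply.
  have := cat_le2 w; rewrite /cat_v leqNgt.
  by rewrite (catv_ge3 simple_e (edges_of_gt2 simple_e deg_u) euv no_trap).
apply/eqP; rewrite eqn_leq /cat_num; apply/andP; split.
  by apply/bigmax_leqP => w _; have [a [b /catv_le2]] := trap w; apply.
apply: leq_trans _ (leq_bigmax u); apply: catv_ge2 => //.
exact: ltnW (edges_of_gt2 simple_e deg_u).
Qed.

Lemma iso_of_seq (T : finType) (e : rel T) n (f : rel 'I_n.+1) (s : seq T) x0 :
  size s = n.+1 -> uniq s -> (forall z, z \in s) ->
  (forall i j : 'I_n.+1, e (nth x0 s i) (nth x0 s j) = f i j) -> graph_iso e f.
Proof.
move=> size_s uniq_s cover_s e_f.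
pose g z : 'I_n.+1 := inord (index z s); pose h (i : 'I_n.+1) := nth x0 s i.
have gK : cancel g h by move=> z; rewrite /g /h inordK ?nth_index // -size_s index_mem.
have hK : cancel h g.
  by move=> i; apply: val_inj; rewrite /g /h /= index_uniq ?inordK // size_s.
exists g; split=> [|x y]; first by exists h.
by rewrite -{1}(gK x) -{1}(gK y); apply: e_f.
Qed.

Definition pendant (T : finType) (e : rel T) (l u : T) : Prop := forall y, e l y -> y = u.

Definition star_at (T : finType) (F : rel T) (u : T) : Prop :=
  forall w y, F u w -> F w y -> y = u.

Lemma trap_edge_star (T : finType) (e : rel T) u a b :
  simple_graph e -> trap_edge e u a b -> star_at (del_edge_rel e a b) u.
Proof.
move=> simple_e /andP[_ /forallP trap] w y Fuw Fwy.
have [irr_F sym_F] := simple_del_edge_rel a b simple_e.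
have wu : w != u by apply: contraTneq Fuw => ->; rewrite irr_F.
have /card_le1_eqP nbr_w := implyP (trap w) (introT andP (conj wu (connect1 Fuw))).
by apply/esym/nbr_w; rewrite inE // sym_F.
Qed.

Lemma pruned_pendants (T : finType) (e : rel T) x y z :
  simple_graph e -> pruned e -> e x y -> e y z -> x != z ->
  pendant e x y -> pendant e z y -> forall w, e y w -> w = x \/ w = z.
Proof.
move=> [_ sym_e] [_ pruned_e] exy eyz xz leaf_x leaf_z w eyw.
have deg1 v : e v y -> pendant e v y -> gdeg e v = 1.
  move=> evy leaf_v; apply/eqP/cards1P; exists y.
  by apply/setP => t; rewrite !inE; apply/idP/eqP => [/leaf_v | ->].
case: (eqVneq w x) => [->|wx]; first by left.
case: (eqVneq w z) => [->|wz]; first by right.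
case: (pruned_e x y z exy eyz xz); split; first exact: deg1.
  by apply: deg1; rewrite // sym_e.
by apply/card_gt2P; exists x, z, w; rewrite !inE sym_e exy eyz eyw xz wx eq_sym wz.
Qed.

Section LocalStructure.

Variables (T : finType) (e : rel T).
Hypotheses (simple_e : simple_graph e) (pruned_e : pruned e).

Let irr_e : irreflexive e := simple_e.1.
Let sym_e : symmetric e := simple_e.2.

Lemma edge_neq x y : e x y -> x != y.
Proof. by apply: contraTneq => ->; rewrite irr_e. Qed.

Lemma connected_closed (P : pred T) u :
  P u -> (forall x y, e x y -> P x -> P y) -> forall z, P z.
Proof.
move=> Pu closedP z; have sym_c := sym_connect_sym sym_e.
by rewrite -[P z]/(z \in P) -(closed_connect (intro_closed sym_c closedP) (pruned_e.1 u z)).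
Qed.

Definition leafy (u l x : T) : Prop :=
  [/\ l != x, e u l, e u x, forall y, e u y -> y = l \/ y = x & pendant e l u].

Definition triangle_hub (u a b : T) : Prop :=
  [/\ e u a, e u b, e a b, forall z, z = u \/ e u z
    & forall x y, e x y -> [\/ x = u, y = u, x = a /\ y = b | x = b /\ y = a]].

Lemma leafy_of_pendants u x v1 v2 :
  e u x -> v1 != v2 -> e u v1 -> e u v2 ->
  (forall y, e u y -> y != x -> pendant e y u) -> exists l, leafy u l x.
Proof.
move=> eux v12 euv1 euv2 leaf.
have [l eul lx] : exists2 l, e u l & l != x.
  case: (eqVneq v1 x) => [v1x | ]; last by exists v1.
  by exists v2; rewrite // -v1x eq_sym.
exists l; split => // [y euy|]; last exact: leaf.
case: (eqVneq y x) => [->|yx]; first by right.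
case: (eqVneq y l) => [->|yl]; first by left.
have [elu ly] : e l u /\ l != y by rewrite sym_e eq_sym.
have [] := pruned_pendants simple_e pruned_e elu euy ly (leaf l eul lx) (leaf y euy yx) eux.
  by move=> xl; rewrite xl eqxx in lx.
by move=> xy; rewrite xy eqxx in yx.
Qed.

Lemma star_step u a b x y :
  star_at (del_edge_rel e a b) u -> e u x -> e x y -> (u, x) != (a, b) -> (u, x) != (b, a) ->
  [\/ y = u, x = a /\ y = b | x = b /\ y = a].
Proof.
move=> star eux exy ux_ab ux_ba; have Fux : del_edge_rel e a b u x by apply/and3P.
case: (del_edge_relP a b exy) => [Fxy | ? | ?]; last by constructor 3.
  by constructor 1; exact: star Fux Fxy.
by constructor 2.
Qed.

Lemma local_structure u a b v1 v2 :
  e a b -> star_at (del_edge_rel e a b) u -> v1 != v2 -> e u v1 -> e u v2 ->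
  triangle_hub u a b \/ exists l x, leafy u l x.
Proof.
move=> eab star v12 euv1 euv2.
have leafy_at x : e u x -> (forall y, e u y -> y != x -> (y != a) && (y != b)) ->
    exists l x, leafy u l x.
  move=> eux others; suff [l] : exists l, leafy u l x by exists l, x.
  apply: leafy_of_pendants eux v12 euv1 euv2 _ => y euy yx z eyz.
  have /andP[ya yb] := others y euy yx.
  have uy_ab : (u, y) != (a, b) by rewrite xpair_eqE negb_and yb orbT.
  have uy_ba : (u, y) != (b, a) by rewrite xpair_eqE negb_and ya orbT.
  case: (star_step star euy eyz uy_ab uy_ba) => [// | [ya' _] | [yb' _]].
    by rewrite ya' eqxx in ya.
  by rewrite yb' eqxx in yb.
case: (eqVneq u a) => [ua|ua].
  right; apply: (leafy_at b); first by rewrite ua.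
  by move=> y euy ->; rewrite -ua eq_sym edge_neq.
case: (eqVneq u b) => [ub|ub].
  right; apply: (leafy_at a); first by rewrite ub sym_e.
  by move=> y euy ->; rewrite -ub eq_sym edge_neq.
have out x y : e u x -> e x y -> [\/ y = u, x = a /\ y = b | x = b /\ y = a].
  by move=> eux exy; apply: star_step; rewrite // xpair_eqE negb_and ?ua ?ub.
have cover : e u a = e u b -> forall z, z = u \/ e u z.
  move=> eua_b z; apply/predU1P; move: z.
  apply: (@connected_closed (fun z => (z == u) || e u z) u); first by rewrite eqxx.
  move=> x y exy /predU1P[xu | eux]; first by rewrite -xu exy orbT.
  case: (out x y eux exy) => [-> | [xa ->] | [xb ->]]; first by rewrite eqxx.
    by rewrite -eua_b -xa eux orbT.
  by rewrite eua_b -xb eux orbT.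
case eua: (e u a); case eub: (e u b).
- have cover_u := cover (etrans eua (esym eub)).
  left; split=> // x y exy; case: (cover_u x) => [-> | eux]; first by constructor 1.
  by case: (out x y eux exy); [constructor 2 | constructor 3 | constructor 4].
- right; apply: (leafy_at a) => // y euy ya; rewrite ya.
  by apply: contraTneq euy => ->; rewrite eub.
- right; apply: (leafy_at b) => // y euy yb; rewrite yb andbT.
  by apply: contraTneq euy => ->; rewrite eua.
- case: (cover (etrans eua (esym eub)) a) => [au | ]; last by rewrite eua.
  by rewrite au eqxx in ua.
Qed.

Lemma iso_cycle3 u a b :
  uniq [:: u; a; b] -> (forall z, z \in [:: u; a; b]) -> e u a -> e u b -> e a b ->
  graph_iso e (@cycle_rel 3).
Proof.
move=> uniq_s cover_s eua eub eab; apply: (@iso_of_seq _ _ 2 _ [:: u; a; b] u) => // i j.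
by case: i j => [[|[|[|]]] ?] // [[|[|[|]]] ?] //;
  rewrite /cycle_rel /path_rel /= ?irr_e //; rewrite sym_e.
Qed.

Lemma iso_path3 l u x :
  uniq [:: l; u; x] -> (forall z, z \in [:: l; u; x]) -> e l u -> e u x -> ~~ e l x ->
  graph_iso e (@path_rel 3).
Proof.
move=> uniq_s cover_s elu eux /negbTE nlx.
apply: (@iso_of_seq _ _ 2 _ [:: l; u; x] l) => // i j.
by case: i j => [[|[|[|]]] ?] // [[|[|[|]]] ?] //; rewrite /path_rel /= ?irr_e //; rewrite sym_e.
Qed.

Lemma iso_path4 l u x y :
  uniq [:: l; u; x; y] -> (forall z, z \in [:: l; u; x; y]) ->
  e l u -> e u x -> e x y -> ~~ e l x -> ~~ e l y -> ~~ e u y ->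
  graph_iso e (@path_rel 4).
Proof.
move=> uniq_s cover_s elu eux exy /negbTE nlx /negbTE nly /negbTE nuy.
apply: (@iso_of_seq _ _ 3 _ [:: l; u; x; y] l) => // i j.
by case: i j => [[|[|[|[|]]]] ?] // [[|[|[|[|]]]] ?] //;
  rewrite /path_rel /= ?irr_e //; rewrite sym_e.
Qed.

Hypothesis trap_e : forall u, exists a b, trap_edge e u a b.

Lemma trap_local_structure u v1 v2 :
  v1 != v2 -> e u v1 -> e u v2 -> (exists a b, triangle_hub u a b) \/ exists l x, leafy u l x.
Proof.
move=> v12 euv1 euv2; have [a [b trap_ab]] := trap_e u.
have eab : e a b by case/andP: trap_ab.
have [hub_u | leafy_u] := local_structure eab (trap_edge_star simple_e trap_ab) v12 euv1 euv2.
  by left; exists a, b.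
by right.
Qed.

Lemma triangle_hub_cycle3 u a b : triangle_hub u a b -> graph_iso e (@cycle_rel 3).
Proof.
case=> eua eub eab cover edges.
have ua := edge_neq eua; have ub := edge_neq eub; have ab := edge_neq eab.
have nbr_u c : e u c -> c = a \/ c = b.
  move=> euc; case: (eqVneq c a) => [-> | ca]; first by left.
  case: (eqVneq c b) => [-> | cb]; first by right.
  have nac : ~ e a c.
    case/edges => [au | cu | [_ cb'] | [ab' _]].
    - by rewrite au eqxx in ua.
    - by move: (edge_neq euc); rewrite cu eqxx.
    - by rewrite cb' eqxx in cb.
    - by rewrite ab' eqxx in ab.
  have eau : e a u by rewrite sym_e.
  have [[a' [b' [_ _ _ cover_a _]]] | [l [x [_ eal _ _ leaf_l]]]] :=
    trap_local_structure ub eau eab.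
    by case: (cover_a c) => // ca'; rewrite ca' eqxx in ca.
  case/edges: eal => [au | lu | [_ lb] | [ab' _]].
  - by rewrite au eqxx in ua.
  - by move: ab; rewrite -(leaf_l b) ?eqxx // lu.
  - by move: ua; rewrite -(leaf_l u) ?eqxx // lb sym_e.
  - by rewrite ab' eqxx in ab.
apply: (iso_cycle3 _ _ eua eub eab); first by rewrite /= !inE negb_or ua ub ab.
by move=> z; rewrite !inE; case: (cover z) => [-> | /nbr_u [-> | ->]]; rewrite eqxx ?orbT.
Qed.

Lemma leafy_path3 u l x : leafy u l x -> pendant e x u -> graph_iso e (@path_rel 3).
Proof.
case=> lx eul eux nbr_u leaf_l leaf_x.
have elu : e l u by rewrite sym_e.
have nlx : ~~ e l x by apply: contraTN (edge_neq eux) => /leaf_l ->; rewrite eqxx.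
apply: (iso_path3 _ _ elu eux nlx).
  by rewrite /= !inE negb_or (edge_neq elu) lx (edge_neq eux).
apply: (@connected_closed (fun z => z \in [:: l; u; x]) u); first by rewrite !inE eqxx orbT.
move=> a b eab; rewrite !inE => /or3P[] /eqP ea; rewrite {a}ea in eab.
- by rewrite (leaf_l b eab) eqxx orbT.
- by case: (nbr_u b eab) => ->; rewrite eqxx ?orbT.
- by rewrite (leaf_x b eab) eqxx orbT.
Qed.

Lemma leafy_path4 u l x y : leafy u l x -> leafy x y u -> graph_iso e (@path_rel 4).
Proof.
case=> lx eul eux nbr_u leaf_l [yu exy exu nbr_x leaf_y].
have elu : e l u by rewrite sym_e.
have ux := edge_neq eux; have xy := edge_neq exy.
have nlx : ~~ e l x by apply: contraTN ux => /leaf_l ->; rewrite eqxx.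
have ly : l != y by apply: contraNneq nlx => ->; rewrite sym_e.
have nly : ~~ e l y by apply: contraTN yu => /leaf_l ->; rewrite eqxx.
have nuy : ~~ e u y.
  by apply/negP => /nbr_u [yl | yx]; [rewrite yl eqxx in ly | rewrite yx eqxx in xy].
apply: (iso_path4 _ _ elu eux exy nlx nly nuy).
  by rewrite /= !inE !negb_or (edge_neq elu) lx ly ux (eq_sym u) yu xy.
apply: (@connected_closed (fun z => z \in [:: l; u; x; y]) u); first by rewrite !inE eqxx orbT.
move=> a b eab; rewrite !inE => /or4P[] /eqP ea; rewrite {a}ea in eab.
- by rewrite (leaf_l b eab) eqxx orbT.
- by case: (nbr_u b eab) => ->; rewrite eqxx ?orbT.
- by case: (nbr_x b eab) => ->; rewrite eqxx ?orbT.
- by rewrite (leaf_y b eab) eqxx !orbT.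
Qed.

Lemma leafy_path u l x :
  leafy u l x -> graph_iso e (@path_rel 3) \/ graph_iso e (@path_rel 4).
Proof.
move=> leafy_u; have [lx eul eux _ leaf_l] := leafy_u.
have nlx : ~~ e l x by apply: contraTN (edge_neq eux) => /leaf_l ->; rewrite eqxx.
case: (boolP [exists y, (y != u) && e x y]) => [/existsP[y /andP[yu exy]] | /existsPn none].
  right; have exu : e x u by rewrite sym_e.
  have uy : u != y by rewrite eq_sym.
  have [[a [b [_ _ _ cover_x _]]] | [y' [u' leafy_x]]] := trap_local_structure uy exu exy.
    case: (cover_x l) => [lx' | exl]; first by rewrite lx' eqxx in lx.
    by rewrite sym_e exl in nlx.
  suff u'u : u' = u by rewrite u'u in leafy_x; apply: leafy_path4 leafy_u leafy_x.
  have [_ _ _ nbr_x leaf_y'] := leafy_x; case: (nbr_x u exu) => // uy'.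
  by move: lx; rewrite -(leaf_y' l) ?eqxx // -uy'.
left; apply: leafy_path3 leafy_u _ => z exz.
by apply/eqP; move: (none z); rewrite exz andbT negbK.
Qed.

Lemma trap_classification u :
  1 < gdeg e u ->
  graph_iso e (@cycle_rel 3) \/ graph_iso e (@path_rel 3) \/ graph_iso e (@path_rel 4).
Proof.
case/card_gt1P => v1 [v2 []]; rewrite !inE => euv1 euv2 v12.
have [[a [b /triangle_hub_cycle3]] | [l [x /leafy_path]]] := trap_local_structure v12 euv1 euv2.
  by left.
by right.
Qed.

End LocalStructure.

(* Unlike [trap_edge], this ignores reachability, so it is invariant under
   isomorphism and decidable on an explicit list of vertices. *)
Definition sparse_trap (T : finType) (e : rel T) (u a b : T) : Prop :=
  e a b /\ forall w, w != u -> gdeg (del_edge_rel e a b) w <= 1.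

Definition sparse_trappable (T : finType) (e : rel T) : Prop :=
  (exists u, 1 < gdeg e u) /\ forall u, exists a b, sparse_trap e u a b.

Lemma sparse_trappable_cat_num (T : finType) (e : rel T) :
  simple_graph e -> sparse_trappable e -> cat_num e = 2.
Proof.
move=> simple_e [branch sparse]; apply/cat_num_eq2 => //; split=> // u.
have [a [b [eab deg_le1]]] := sparse u; exists a, b; rewrite /trap_edge eab.
by apply/forallP => w; apply/implyP => /andP[wu _]; exact: deg_le1.
Qed.

Lemma gdeg_iso (T U : finType) (e : rel T) (f : rel U) (g : T -> U) v :
  bijective g -> (forall x y, e x y = f (g x) (g y)) -> gdeg e v = gdeg f (g v).
Proof.
move=> bij_g e_f; rewrite /gdeg -(on_card_preimset (onW_bij _ bij_g)).
by apply: eq_card => z; rewrite !inE e_f.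
Qed.

Section Isomorphism.

Variables (T U : finType) (e : rel T) (f : rel U) (g : T -> U).
Hypotheses (bij_g : bijective g) (e_f : forall x y, e x y = f (g x) (g y)).

Lemma del_edge_rel_iso a b x y :
  del_edge_rel e a b x y = del_edge_rel f (g a) (g b) (g x) (g y).
Proof. by rewrite /del_edge_rel e_f !xpair_eqE !(bij_eq bij_g). Qed.

Lemma sparse_trappable_iso : sparse_trappable f -> sparse_trappable e.
Proof.
have [h _ hK] := bij_g.
case=> [[u' deg_u'] sparse]; split.
  by exists (h u'); rewrite (gdeg_iso _ bij_g e_f) hK.
move=> u; have [a' [b' [fab deg_le1]]] := sparse (g u).
exists (h a'), (h b'); split; first by rewrite e_f !hK.
move=> w wu; rewrite (gdeg_iso _ bij_g (del_edge_rel_iso (h a') (h b'))) !hK.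
by apply: deg_le1; rewrite (bij_eq bij_g).
Qed.

End Isomorphism.

Definition sparse_trappableb (T : finType) (f : rel T) (s : seq T) : bool :=
  has (fun u => has (fun v1 => has (fun v2 => [&& v1 != v2, f u v1 & f u v2]) s) s) s &&
  all (fun u => has (fun a => has (fun b => f a b && all (fun w => (w != u) ==>
         all (fun z1 => all (fun z2 =>
           del_edge_rel f a b w z1 ==> del_edge_rel f a b w z2 ==> (z1 == z2)) s) s) s) s) s) s.

Lemma sparse_trappableP (T : finType) (f : rel T) (s : seq T) :
  (forall x, x \in s) -> sparse_trappableb f s -> sparse_trappable f.
Proof.
move=> s_all /andP[/hasP[u _ /hasP[v1 _ /hasP[v2 _ /and3P[v12 fuv1 fuv2]]]] /allP sparse].
split=> [|w].
  by exists u; apply/card_gt1P; exists v1, v2; rewrite !inE.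
have /hasP[a _ /hasP[b _ /andP[fab /allP deg_le1]]] := sparse w (s_all w).
exists a, b; split=> // x xw; apply/card_le1_eqP => z1 z2; rewrite !inE => Fz1 Fz2.
move/implyP/(_ xw)/allP/(_ z1 (s_all z1))/allP/(_ z2 (s_all z2)): (deg_le1 x (s_all x)).
by rewrite Fz1 Fz2 => /eqP.
Qed.

(* Explicit vertex lists: [enum 'I_n] does not reduce under [vm_compute],
   because [insub] inspects the opaque proof [idP]. *)
Definition ord3_seq : seq 'I_3 := [:: @Ordinal 3 0 isT; @Ordinal 3 1 isT; @Ordinal 3 2 isT].
Definition ord4_seq : seq 'I_4 :=
  [:: @Ordinal 4 0 isT; @Ordinal 4 1 isT; @Ordinal 4 2 isT; @Ordinal 4 3 isT].

Lemma mem_ord3_seq i : i \in ord3_seq. Proof. by case: i => [[|[|[|]]] ?]. Qed.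
Lemma mem_ord4_seq i : i \in ord4_seq. Proof. by case: i => [[|[|[|[|]]]] ?]. Qed.

Lemma small_graphs_sparse_trappable :
  [/\ sparse_trappable (@cycle_rel 3), sparse_trappable (@path_rel 3)
    & sparse_trappable (@path_rel 4)].
Proof.
by split; [apply: sparse_trappableP mem_ord3_seq _ | apply: sparse_trappableP mem_ord3_seq _
  | apply: sparse_trappableP mem_ord4_seq _]; vm_compute.
Qed.

Theorem mainTheorem6 (T : finType) (e : rel T) :
  simple_graph e -> pruned e ->
  (cat_num e = 2 <->
   graph_iso e (@cycle_rel 3) \/ graph_iso e (@path_rel 3) \/ graph_iso e (@path_rel 4)).
Proof.
move=> simple_e pruned_e; split=> [cat2 | iso].
  have [[u deg_u] trap] := (cat_num_eq2 simple_e).1 cat2.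
  exact: trap_classification simple_e pruned_e trap u deg_u.
apply: sparse_trappable_cat_num => //.
have [C3 P3 P4] := small_graphs_sparse_trappable.
by case: iso => [|[|]] [g [bij_g e_f]]; apply: sparse_trappable_iso bij_g e_f _.
Qed.
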